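(* Let $X$ be a set of variables, $\mathbb{K}$ a field, $<$ an admissible (monomial) order on the set $[X]$ of monomials, and $I$ an ideal of $\mathbb{K}[X]$. Let $R=\{f_1,\dots,f_n\}$ be a finite set of nonzero polynomials generating $I$. Then $R$ is a Gröbner basis of $I$ (with respect to $<$) if and only if the set $F_R=\{T_1,\dots,T_n\}$ of reduction operators associated to $R$ is confluent.
   Context: A reduction operator relative to $([X],<)$ is an idempotent linear endomorphism $T$ of $\mathbb{K}[X]$ such that for every monomial $m$, either $T(m)=m$ or $T(m)$ is a linear combination of monomials strictly smaller than $m$. For every subspace $V$ of $\mathbb{K}[X]$ there is a unique reduction operator with kernel $V$. $F_R=\{T_1,\dots,T_n\}$ where $T_i$ is the reduction operator whose kernel is the ideal of $\mathbb{K}[X]$ generated by $f_i$. For a reduction operator $T$, $\mathrm{nf}(T)=\{m\in[X]\mid T(m)=m\}$. For a set $F$ of reduction operators, $\wedge F$ is the reduction operator whose kernel is $\sum_{T\in F}\ker T$, and $F$ is confluent if $\bigcap_{T\in F}\mathrm{nf}(T)=\mathrm{nf}(\wedge F)$. *)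

From mathcomp Require Import all_boot all_algebra.
From mathcomp Require Import mpoly.
Set Implicit Arguments. Unset Strict Implicit. Unset Printing Implicit Defensive.
Import GRing.Theory.
Local Open Scope ring_scope.

Section Defs.
Variables (K : fieldType) (nv : nat).
Local Notation poly := {mpoly K[nv]}.
Local Notation mon := 'X_{1..nv}.

Definition admissible (lt : mon -> mon -> Prop) : Prop :=
  [/\ (forall m, ~ lt m m),
      (forall m1 m2 m3, lt m1 m2 -> lt m2 m3 -> lt m1 m3),
      (forall m1 m2, m1 <> m2 -> lt m1 m2 \/ lt m2 m1),
      (forall m1 m2 m, lt m1 m2 -> lt (m1 + m)%MM (m2 + m)%MM) &
      (forall m, m <> 0%MM -> lt 0%MM m)].

Definition is_lm (lt : mon -> mon -> Prop) (p : poly) (m : mon) : Prop :=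
  m \in msupp p /\ forall m', m' \in msupp p -> m' <> m -> lt m' m.

Definition reduction_operator (lt : mon -> mon -> Prop) (T : poly -> poly) : Prop :=
  [/\ (forall (a : K) (p q : poly), T (a *: p + q) = a *: T p + T q),
      (forall p, T (T p) = T p) &
      (forall m : mon, T 'X_[m] = 'X_[m] \/
                       (forall m', m' \in msupp (T 'X_[m]) -> lt m' m))].

Definition has_kernel (T : poly -> poly) (V : poly -> Prop) : Prop :=
  forall p, T p = 0 <-> V p.

Definition gen_ideal (k : nat) (f : 'I_k -> poly) (p : poly) : Prop :=
  exists q : 'I_k -> poly, p = \sum_(i < k) q i * f i.

Definition sum_kernels (k : nat) (T : 'I_k -> poly -> poly) (p : poly) : Prop :=
  exists ps : 'I_k -> poly, (forall i, T i (ps i) = 0) /\ p = \sum_(i < k) ps i.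

Definition nf (T : poly -> poly) (m : mon) : Prop := T 'X_[m] = 'X_[m].

(* F (indexed by 'I_k) is confluent, W being the reduction operator /\F *)
Definition confluent (k : nat) (T : 'I_k -> poly -> poly) (W : poly -> poly) : Prop :=
  forall m : mon, (forall i, nf (T i) m) <-> nf W m.

Definition groebner_basis (lt : mon -> mon -> Prop) (k : nat) (f : 'I_k -> poly)
  (I : poly -> Prop) : Prop :=
  (forall i, I (f i)) /\
  forall p, I p -> p != 0 ->
    exists i m mi, [/\ is_lm lt p m, is_lm lt (f i) mi & (mi <= m)%MM].

End Defs.

(* For a reduction operator T, a monomial m lies outside nf(T) exactly when it
   is the leading monomial of an element of ker T: if T X^m <> X^m, then
   X^m - T X^m is in ker T with leading monomial m; conversely, if m is in
   nf(T) and v has leading monomial m, the coefficient of m in T v is that of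
   v, since T sends every smaller monomial to smaller monomials.  As
   ker T_i = (f_i), nf(T_i) is the complement of the multiples of lm(f_i); as
   ker (/\F_R) = (f_1) + ... + (f_n) = I, nf(/\F_R) is the complement of
   lm(I).  Confluence therefore says that every leading monomial of I is a
   multiple of some lm(f_i), which is the Groebner basis property. *)
From HB Require Import structures.
From mathcomp Require Import all_boot all_algebra.
From mathcomp Require Import mpoly.
From Stdlib Require Import Classical.
Set Implicit Arguments. Unset Strict Implicit. Unset Printing Implicit Defensive.
Import GRing.Theory.
Local Open Scope ring_scope.

Section LeadingMonomials.
Variables (K : fieldType) (nv : nat).
Local Notation poly := {mpoly K[nv]}.
Local Notation mon := 'X_{1..nv}.
Variable lt : mon -> mon -> Prop.
Hypothesis Hlt : admissible lt.

Lemma ltm_irr m : ~ lt m m. Proof. by case: Hlt. Qed.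

Lemma ltm_trans m1 m2 m3 : lt m1 m2 -> lt m2 m3 -> lt m1 m3.
Proof. by case: Hlt => _ h _ _ _; apply: h. Qed.

Lemma ltm_total m1 m2 : m1 <> m2 -> lt m1 m2 \/ lt m2 m1.
Proof. by case: Hlt => _ _ h _ _; apply: h. Qed.

Lemma ltm_addr m1 m2 m : lt m1 m2 -> lt (m1 + m)%MM (m2 + m)%MM.
Proof. by case: Hlt => _ _ _ h _; apply: h. Qed.

Lemma ltm_addl m1 m2 m : lt m1 m2 -> lt (m + m1)%MM (m + m2)%MM.
Proof. by rewrite ![(m + _)%MM]addmC; apply: ltm_addr. Qed.

Lemma seq_ltm_max (s : seq mon) : s != [::] ->
  exists2 m, m \in s & forall m', m' \in s -> m' <> m -> lt m' m.
Proof.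
elim: s => // a s IH _; have [-> | /IH [m ms Hm]] := eqVneq s [::].
  by exists a => [|m']; rewrite ?mem_seq1 // => /eqP.
have [-> | /eqP /ltm_total [am | ma]] := eqVneq a m.
- exists m => [|m']; first by rewrite inE eqxx.
  by rewrite inE => /orP [/eqP // | /Hm].
- exists m => [|m']; first by rewrite inE ms orbT.
  by rewrite inE => /orP [/eqP -> | /Hm].
- exists a => [|m']; first by rewrite inE eqxx.
  rewrite inE => /orP [/eqP // | m's _].
  have [-> // | /eqP m'm] := eqVneq m' m.
  exact: ltm_trans (Hm _ m's m'm) ma.
Qed.

Lemma lm_exists (p : poly) : p != 0 -> exists m, is_lm lt p m.
Proof. by rewrite -msupp_eq0 => /seq_ltm_max [m]; exists m. Qed.

Lemma lm_unique (p : poly) m1 m2 : is_lm lt p m1 -> is_lm lt p m2 -> m1 = m2.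
Proof.
move=> [p1 H1] [p2 H2]; have [// | /eqP m12] := eqVneq m1 m2.
by case: (ltm_irr (ltm_trans (H2 _ p1 m12) (H1 _ p2 (nesym m12)))).
Qed.

Lemma lm_neq0 (p : poly) m : is_lm lt p m -> p != 0.
Proof. by case=> pm _; apply: contraTneq pm => ->; rewrite msupp0. Qed.

Lemma lmX m : is_lm lt ('X_[m] : poly) m.
Proof. by split=> [|m']; rewrite msuppX mem_seq1 // => /eqP. Qed.

Lemma ltm_add_supp (q g : poly) a b x y :
  is_lm lt q a -> is_lm lt g b -> x \in msupp q -> y \in msupp g ->
  (x, y) != (a, b) -> lt (x + y)%MM (a + b)%MM.
Proof.
move=> [_ Ha] [_ Hb] xq yg; rewrite xpair_eqE.
have [-> | /eqP xa] := eqVneq x a; have [-> | /eqP yb] := eqVneq y b => // _.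
- exact/ltm_addl/Hb.
- exact/ltm_addr/Ha.
- exact: ltm_trans (ltm_addr y (Ha _ xq xa)) (ltm_addl a (Hb _ yg yb)).
Qed.

Lemma lm_mul (q g : poly) a b :
  is_lm lt q a -> is_lm lt g b -> is_lm lt (q * g) (a + b)%MM.
Proof.
move=> lmq lmg; have [[qa _] [gb _]] := (lmq, lmg).
split=> [|m' /msuppM_le /allpairsP [[x y] /= [xq yg ->]] xy_ab]; last first.
  apply: (ltm_add_supp lmq lmg) => //.
  by apply/eqP => -[ex ey]; apply: xy_ab; rewrite ex ey.
rewrite mcoeff_msupp mpolyME raddf_sum (bigD1_seq (a, b)) ?allpairs_f //=;
  last by rewrite allpairs_uniq ?msupp_uniq // => -[? ?] [? ?].
rewrite mcoeffZ mcoeffX eqxx mulr1 big_seq_cond big1 ?addr0.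
  by rewrite mulf_neq0 // -mcoeff_msupp.
move=> [x y] /andP [/allpairsP [[x' y'] /= [xq yg [-> ->]]] xy_ab].
rewrite mcoeffZ mcoeffX; case: eqP => [xy_eq | _]; last by rewrite mulr0.
by have := ltm_add_supp lmq lmg xq yg xy_ab; rewrite xy_eq => /ltm_irr.
Qed.

End LeadingMonomials.

Section ReductionOperator.
Variables (K : fieldType) (nv : nat).
Local Notation poly := {mpoly K[nv]}.
Local Notation mon := 'X_{1..nv}.
Variable lt : mon -> mon -> Prop.
Hypothesis Hlt : admissible lt.

Section OneOperator.
Variable T : poly -> poly.
Hypothesis HT : reduction_operator lt T.

Let T_linear : linear T. Proof. by case: HT => HL _ _ a p q; rewrite HL. Qed.
HB.instance Definition _ := GRing.isLinear.Build K poly poly *:%R T T_linear.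

Lemma mcoeff_redX_lt m' m : lt m' m -> (T 'X_[m'])@_m = 0.
Proof.
move=> m'm; case: HT => _ _ /(_ m') [-> | Hsupp].
  by move: m'm; rewrite mcoeffX; case: eqP => // -> /(ltm_irr Hlt).
apply: memN_msupp_eq0; apply/negP => /Hsupp mm'.
exact: (ltm_irr Hlt (ltm_trans Hlt mm' m'm)).
Qed.

Lemma ker_lm_notnf v m : T v = 0 -> is_lm lt v m -> ~ nf T m.
Proof.
move=> Tv [vm Hv] nfm.
have Tv_m : (T v)@_m = v@_m.
  rewrite {1}(mpolyE v) linear_sum raddf_sum (bigD1_seq m) ?msupp_uniq //=.
  rewrite linearZ mcoeffZ /= nfm mcoeffX eqxx mulr1 big_seq_cond big1 ?addr0 //.
  move=> m' /andP [m'v /eqP m'm].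
  by rewrite linearZ mcoeffZ /= mcoeff_redX_lt ?mulr0 //; apply: Hv.
by move: vm; rewrite mcoeff_msupp -Tv_m Tv mcoeff0 eqxx.
Qed.

Lemma notnf_ker_lm m : ~ nf T m -> exists v, T v = 0 /\ is_lm lt v m.
Proof.
case: HT => _ T_idem /(_ m) [// | Hsupp] _.
exists ('X_[m] - T 'X_[m]); split; first by rewrite linearB /= T_idem subrr.
have mT : m \notin msupp (T 'X_[m]) by apply/negP => /Hsupp /(ltm_irr Hlt).
split.
  rewrite mcoeff_msupp mcoeffB mcoeffX eqxx (memN_msupp_eq0 mT).
  by rewrite subr0 oner_eq0.
move=> m' /msuppB_le; rewrite mem_cat msuppX mem_seq1.
by case/orP => [/eqP | /Hsupp].
Qed.

Lemma notnfP m : ~ nf T m <-> exists v, T v = 0 /\ is_lm lt v m.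
Proof.
by split=> [|[v [Tv lmv]]]; [apply: notnf_ker_lm | apply: ker_lm_notnf Tv lmv].
Qed.

End OneOperator.

Lemma nf_ker_sub (T W : poly -> poly) m :
  reduction_operator lt T -> reduction_operator lt W ->
  (forall p, T p = 0 -> W p = 0) -> nf W m -> nf T m.
Proof.
move=> HT HW TW nfW; apply: NNPP => /(notnfP HT) [v [/TW Wv lmv]].
by apply: (notnfP HW m).2 nfW; exists v.
Qed.

End ReductionOperator.

Section Ideals.
Variables (K : fieldType) (nv : nat).
Local Notation poly := {mpoly K[nv]}.
Local Notation mon := 'X_{1..nv}.

Lemma principal_idealP (g p : poly) :
  gen_ideal (fun _ : 'I_1 => g) p <-> exists q, p = q * g.
Proof.
split=> [[q ->] | [q ->]]; first by exists (q ord0); rewrite big_ord1.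
by exists (fun _ => q); rewrite big_ord1.
Qed.

Lemma gen_ideal_gen k (f : 'I_k -> poly) i : gen_ideal f (f i).
Proof.
exists (fun j => (j == i)%:R); rewrite (bigD1 i) //= eqxx mul1r big1 ?addr0 //.
by move=> j /negbTE ->; rewrite mul0r.
Qed.

Lemma gen_ideal_principal k (f : 'I_k -> poly) i p :
  gen_ideal (fun _ : 'I_1 => f i) p -> gen_ideal f p.
Proof.
case/principal_idealP => q ->; exists (fun j => (j == i)%:R * q).
rewrite (bigD1 i) //= eqxx mul1r big1 ?addr0 //.
by move=> j /negbTE ->; rewrite !mul0r.
Qed.

Lemma sum_kernels_gen_ideal k (T : 'I_k -> poly -> poly) (f : 'I_k -> poly) :
  (forall i, has_kernel (T i) (gen_ideal (fun _ : 'I_1 => f i))) ->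
  forall p, sum_kernels T p <-> gen_ideal f p.
Proof.
move=> kerT p; split=> [[ps [psT ->]] | [q ->]].
  have psE i : exists q, ps i = q * f i by apply/principal_idealP/kerT.
  have [q qE] := fin_all_exists psE.
  by exists q; apply: eq_bigr => i _; rewrite qE.
exists (fun i => q i * f i); split=> // i.
by apply/kerT/principal_idealP; exists (q i).
Qed.

Variable lt : mon -> mon -> Prop.
Hypothesis Hlt : admissible lt.

Lemma lm_principal_ideal (g : poly) mg m : is_lm lt g mg ->
  (exists v, gen_ideal (fun _ : 'I_1 => g) v /\ is_lm lt v m) <-> (mg <= m)%MM.
Proof.
move=> lmg; split=> [[v [/principal_idealP [q vE] lmv]] | mg_m].
  have q_neq0 : q != 0.
    by apply: contraTneq (lm_neq0 lmv) => q0; rewrite vE q0 mul0r eqxx.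
  have [a lmq] := lm_exists Hlt q_neq0.
  rewrite (lm_unique Hlt lmv (_ : is_lm lt v (a + mg)%MM)) ?lem_addl //.
  by rewrite vE; apply: lm_mul.
exists ('X_[m - mg] * g); split.
  by apply/principal_idealP; exists 'X_[m - mg].
by rewrite -{2}(submK mg_m); apply: lm_mul => //; apply: lmX.
Qed.

End Ideals.

Theorem mainTheorem9 (K : fieldType) (nv : nat)
  (lt : 'X_{1..nv} -> 'X_{1..nv} -> Prop) (Hlt : admissible lt)
  (I : {mpoly K[nv]} -> Prop)
  (k : nat) (f : 'I_k -> {mpoly K[nv]}) (Hnz : forall i, f i != 0)
  (HI : forall p, I p <-> gen_ideal f p)
  (T : 'I_k -> {mpoly K[nv]} -> {mpoly K[nv]})
  (HT : forall i, reduction_operator lt (T i) /\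
                  has_kernel (T i) (gen_ideal (fun _ : 'I_1 => f i)))
  (W : {mpoly K[nv]} -> {mpoly K[nv]})
  (HW : reduction_operator lt W /\ has_kernel W (sum_kernels T)) :
  groebner_basis lt f I <-> confluent T W.
Proof.
have [[Wred kerW] Tred] := (HW, fun i => (HT i).1).
have WI p : W p = 0 <-> I p.
  apply: iff_trans (kerW p) (iff_trans _ (iff_sym (HI p))).
  by apply: sum_kernels_gen_ideal => i; apply: (HT i).2.
have nfT i m mi : is_lm lt (f i) mi -> ~ nf (T i) m <-> (mi <= m)%MM.
  move=> lmi; apply: iff_trans (notnfP Hlt (Tred i) m) _.
  apply: iff_trans (lm_principal_ideal Hlt m lmi).
  by split=> -[v [vI lmv]]; exists v; split=> //; apply/(HT i).2.
split=> [[_ GB] m | conf].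
  split=> [nfTm | nfWm i]; last first.
    apply: (nf_ker_sub Hlt (Tred i) Wred) nfWm => p /(HT i).2.
    by move/gen_ideal_principal/HI/WI.
  apply: NNPP => /(notnfP Hlt Wred) [v [/WI vI lmv]].
  have [i [m' [mi [lm' lmi mi_m']]]] := GB v vI (lm_neq0 lmv).
  by apply: (nfT i m mi lmi).2 (nfTm i); rewrite -(lm_unique Hlt lm' lmv).
split=> [i | p pI p_neq0]; first exact/HI/gen_ideal_gen.
have [m lmp] := lm_exists Hlt p_neq0.
have /not_all_ex_not [i nTi] : ~ (forall i, nf (T i) m).
  by move/conf; apply/(notnfP Hlt Wred); exists p; split=> //; apply/WI.
have [mi lmi] := lm_exists Hlt (Hnz i).
by exists i, m, mi; split=> //; apply/(nfT i m mi lmi).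
Qed.
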